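(* Let $R\subset\mathbb{R}^N$ be a finite reduced root system with positive roots $R_+$ and multiplicity function $\kappa$, with Dunkl operators $\mathcal{D}_i$ as in the context. For $a,b\in\mathbb{R}^N$ set $J_{a,b}=\langle a,x\rangle\langle b,\nabla_\kappa\rangle-\langle b,x\rangle\langle a,\nabla_\kappa\rangle$ and $\mathcal{J}=\sum_{1\le i<j\le N}J_{\varepsilon_i,\varepsilon_j}^2$, where $\varepsilon_i$ are the standard unit vectors. Then, as operators on polynomials, \[ \mathcal{J}=|x|^2\Delta_\kappa-\langle x,\nabla_\kappa\rangle^2-(N-2)\langle x,\nabla_\kappa\rangle-2\sum_{v\in R_+}\kappa_v\sigma_v\langle x,\nabla_\kappa\rangle . \]
   Context: Vectors in $\mathbb{R}^N$ are row vectors, $\langle x,y\rangle=\sum x_iy_i$, $|x|^2=\langle x,x\rangle$. For $v\neq0$, $x\sigma_v=x-2\frac{\langle x,v\rangle}{|v|^2}v$. A finite reduced root system is a finite set $R$ of nonzero vectors with $u\sigma_v\in R$ for $u,v\in R$ and such that $u,cu\in R$ implies $c=\pm1$; $W(R)$ is the group generated by the $\sigma_v$; $R_+=\{v\in R:\langle u_0,v\rangle>0\}$ for a fixed $u_0$ with $\langle u_0,v\rangle\ne0$ for all $v\in R$. A multiplicity function $v\mapsto\kappa_v$ is constant on $W(R)$-orbits (values real or formal parameters). Dunkl operators: $\mathcal{D}_if(x)=\partial_if(x)+\sum_{v\in R_+}\kappa_v\frac{f(x)-f(x\sigma_v)}{\langle x,v\rangle}v_i$; $\langle a,\nabla_\kappa\rangle=\sum_ia_i\mathcal{D}_i$;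 $\langle x,\nabla_\kappa\rangle=\sum_ix_i\mathcal{D}_i$; $\Delta_\kappa=\sum_i\mathcal{D}_i^2$. The operator $\sigma_v$ acts by $(\sigma_vf)(x)=f(x\sigma_v)$; $\langle a,x\rangle$ and $|x|^2$ act by multiplication. *)

From HB Require Import structures.
From mathcomp Require Import all_boot all_order all_algebra.
From mathcomp Require Import mpoly.
From Stdlib Require Import ClassicalEpsilon.

Set Implicit Arguments.
Unset Strict Implicit.
Unset Printing Implicit Defensive.

Import Order.TTheory GRing.Theory Num.Theory.
Local Open Scope ring_scope.

Section Dunkl.
Variables (R : realFieldType) (N : nat).

Definition dotv (x y : 'rV[R]_N) : R := \sum_(i < N) x 0 i * y 0 i.

Definition refl (v x : 'rV[R]_N) : 'rV[R]_N :=
  x - (2 * dotv x v / dotv v v) *: v.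

Definition root_system (Rs : seq 'rV[R]_N) : Prop :=
  [/\ uniq Rs,
      (forall v, v \in Rs -> v != 0),
      (forall u v, u \in Rs -> v \in Rs -> refl v u \in Rs) &
      (forall u (c : R), u \in Rs -> c *: u \in Rs -> c = 1 \/ c = -1)].

Definition regular_vec (Rs : seq 'rV[R]_N) (u0 : 'rV[R]_N) : Prop :=
  forall v, v \in Rs -> dotv u0 v != 0.

Definition pos_roots (Rs : seq 'rV[R]_N) (u0 : 'rV[R]_N) : seq 'rV[R]_N :=
  [seq v <- Rs | 0 < dotv u0 v].

(* multiplicity function: constant on W(R)-orbits, W(R) generated by the
   reflections sigma_v, v in R *)
Definition multiplicity (Rs : seq 'rV[R]_N) (kappa : 'rV[R]_N -> R) : Prop :=
  forall u (s : seq 'rV[R]_N), u \in Rs -> all (mem Rs) s ->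
    kappa (foldl (fun x v => refl v x) u s) = kappa u.

Definition Pol := {mpoly R[N]}.

Definition linP (a : 'rV[R]_N) : Pol := \sum_(i < N) a 0 i *: 'X_i.

Definition normsqP : Pol := \sum_(i < N) 'X_i ^+ 2.

(* (sigma_v f)(x) = f(x sigma_v) : substitute x_j := (x sigma_v)_j *)
Definition sigmaP (v : 'rV[R]_N) (f : Pol) : Pol :=
  comp_mpoly [tuple ('X_j - (2 / dotv v v * v 0 j) *: linP v) | j < N] f.

(* the divided difference (f(x) - f(x sigma_v)) / <x, v>, i.e. the
   (unique) polynomial q with f - sigma_v f = <x,v> * q *)
Definition ddiff (v : 'rV[R]_N) (f : Pol) : Pol :=
  epsilon (inhabits (0 : Pol)) (fun q : Pol => f - sigmaP v f = linP v * q).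

Variables (Rs : seq 'rV[R]_N) (u0 : 'rV[R]_N) (kappa : 'rV[R]_N -> R).

Definition Dunkl (i : 'I_N) (f : Pol) : Pol :=
  mderiv i f + \sum_(v <- pos_roots Rs u0) (kappa v * v 0 i) *: ddiff v f.

Definition dirD (a : 'rV[R]_N) (f : Pol) : Pol :=
  \sum_(i < N) a 0 i *: Dunkl i f.

Definition xnabla (f : Pol) : Pol := \sum_(i < N) 'X_i * Dunkl i f.

Definition DLap (f : Pol) : Pol := \sum_(i < N) Dunkl i (Dunkl i f).

Definition Jop (a b : 'rV[R]_N) (f : Pol) : Pol :=
  linP a * dirD b f - linP b * dirD a f.

Definition epsv (i : 'I_N) : 'rV[R]_N := delta_mx 0 i.

Definition calJ (f : Pol) : Pol :=
  \sum_(i < N) \sum_(j < N | (i < j)%N)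
     Jop (epsv i) (epsv j) (Jop (epsv i) (epsv j) f).

End Dunkl.

(* The Dunkl operators satisfy the commutation relation
     D_j (x_i g) = x_i D_j g + delta_ij g
                   + sum_(v in R+) kappa_v (2 v_i v_j / |v|^2) sigma_v g,
   which comes from the Leibniz rule for the divided difference
   (g - sigma_v g) / <x, v>.  Expanding J_ij^2 and symmetrising gives
   calJ = sum_(i,j) x_i D_j x_i D_j - sum_(i,j) x_i D_j x_j D_i.  Moving the
   x's to the left, these two sums and <x, nabla>^2 share the second-order
   term sum_(i,j) x_i x_j D_j D_i and the reflection term
   sum_v kappa_v (2 / |v|^2) <x, v> sigma_v <v, nabla>, which cancel; the
   delta_ij terms give -(N - 2) <x, nabla>, and the identity
     sum_i x_i sigma_v D_i
       = sigma_v <x, nabla> + (2 / |v|^2) <x, v> sigma_v <v, nabla>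
   produces the last term. *)

From HB Require Import structures.
From mathcomp Require Import all_boot all_order all_algebra.
From mathcomp Require Import mpoly ring.
From Stdlib Require Import ClassicalEpsilon.

Set Implicit Arguments.
Unset Strict Implicit.
Unset Printing Implicit Defensive.

Import Order.TTheory GRing.Theory Num.Theory.
Local Open Scope ring_scope.

Lemma sum_kronecker (R : pzRingType) (V : lmodType R) n (F : 'I_n -> V) i :
  \sum_(j < n) (i == j)%:R *: F j = F i.
Proof.
rewrite (bigD1 i) //= eqxx scale1r big1 ?addr0 // => j.
by rewrite eq_sym => /negbTE ->; rewrite scale0r.
Qed.

Lemma sum_ltn_symmetrize (V : nmodType) n (H : 'I_n -> 'I_n -> V) :
  (forall i, H i i = 0) ->
  \sum_(i < n) \sum_(j < n | (i < j)%N) (H i j + H j i)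
  = \sum_(i < n) \sum_(j < n) H i j.
Proof.
move=> H0; under eq_bigr => i _ do rewrite big_split /=.
rewrite big_split /= [X in _ + X](exchange_big_dep xpredT) //= -big_split /=.
apply: eq_bigr => i _; rewrite big_mkcond [X in _ + X]big_mkcond -big_split /=.
apply: eq_bigr => j _.
by case: ltngtP => [||/val_inj ->]; rewrite ?addr0 ?add0r ?H0.
Qed.

Lemma mderivXU (R : nzRingType) n (i j : 'I_n) :
  mderiv j ('X_i : {mpoly R[n]}) = (i == j)%:R.
Proof.
rewrite mderivX mnm1E; case: eqP => [->|_]; last by rewrite scale0r.
by rewrite -[X in (X - _)%MM]add0m addmK mpolyX0 scale1r.
Qed.

Section Reflection.
Variables (R : realFieldType) (N : nat).
Local Notation P := {mpoly R[N]}.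

Lemma linP_eps i : linP (epsv R i) = 'X_i :> P.
Proof.
rewrite /linP -[RHS](sum_kronecker (fun k => 'X_k)).
by apply: eq_bigr => k _; rewrite /epsv mxE eqxx eq_sym.
Qed.

Variable v : 'rV[R]_N.
Local Notation s := (sigmaP v).
Local Notation L := (linP v).

Lemma sigmaPD f g : s (f + g) = s f + s g. Proof. exact: raddfD. Qed.
Lemma sigmaPZ a f : s (a *: f) = a *: s f. Proof. exact: comp_mpolyZ. Qed.
Lemma sigmaPM f g : s (f * g) = s f * s g. Proof. exact: rmorphM. Qed.
Lemma sigmaP1 : s 1 = 1. Proof. exact: rmorph1. Qed.

Lemma sigmaP_sum I (r : seq I) (Pr : pred I) (F : I -> P) :
  s (\sum_(k <- r | Pr k) F k) = \sum_(k <- r | Pr k) s (F k).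
Proof. exact: raddf_sum. Qed.

Lemma sigmaPX i : s 'X_i = 'X_i - (2 / dotv v v * v 0 i) *: L.
Proof. by rewrite /sigmaP comp_mpolyXU -tnth_nth tnth_mktuple. Qed.

(* The f such that <x, v> divides f - sigma_v f form a subalgebra containing
   every x_i. *)
Lemma sigmaP_divisible f : exists q, f - s f = L * q.
Proof.
pose dvd g := exists q, g - s g = L * q.
have dvdM g h : dvd g -> dvd h -> dvd (g * h).
  move=> [q1 e1] [q2 e2]; exists (q1 * h + s g * q2).
  rewrite sigmaPM mulrDr !mulrA -e1 [L * _]mulrC -mulrA -e2; ring.
have dvd1 : dvd 1 by exists 0; rewrite sigmaP1 subrr mulr0.
have dvdX i : dvd 'X_i.
  exists (2 / dotv v v * v 0 i)%:MP.
  by rewrite sigmaPX opprB addrC subrK -mul_mpolyC mulrC.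
elim/mpolyind: f => [|a m p _ _ [q e]].
  by exists 0; rewrite /sigmaP raddf0 subrr mulr0.
have [q' e'] : dvd 'X_[m].
  rewrite mpolyXE_id; apply: big_ind => // i _.
  by elim: (m i) => // k IH; rewrite exprS; apply: dvdM.
exists (a *: q' + q); rewrite sigmaPD sigmaPZ mulrDr -e -scalerAr -e'.
by rewrite scalerBr opprD addrACA.
Qed.

Hypothesis anisotropic : dotv v v != 0.

Lemma mderiv_linP k : mderiv k L = (v 0 k)%:MP.
Proof.
rewrite /linP raddf_sum /= -[RHS](sum_kronecker (fun i => (v 0 i)%:MP)).
apply: eq_bigr => i _; rewrite mderivZ mderivXU eq_sym.
by case: (k == i); rewrite ?scale1r ?scale0r ?scaler0 ?alg_mpolyC.
Qed.

Lemma linP_neq0 : L != 0.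
Proof.
apply: contra anisotropic => /eqP L0; apply/eqP; rewrite /dotv big1 // => k _.
have /eqP : (v 0 k)%:MP = 0 :> P by rewrite -mderiv_linP L0 mderiv0.
by rewrite mpolyC_eq0 => /eqP ->; rewrite mulr0.
Qed.

Lemma ddiffP f : f - s f = L * ddiff v f.
Proof.
apply: (epsilon_spec _ (fun q : P => f - s f = L * q)).
exact: sigmaP_divisible.
Qed.

Lemma ddiff_unique f q : f - s f = L * q -> ddiff v f = q.
Proof. by move=> e; apply: (mulfI linP_neq0); rewrite -ddiffP. Qed.

Lemma ddiffD f g : ddiff v (f + g) = ddiff v f + ddiff v g.
Proof. by apply: ddiff_unique; rewrite sigmaPD mulrDr -!ddiffP; ring. Qed.

Lemma ddiffZ a f : ddiff v (a *: f) = a *: ddiff v f.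
Proof. by apply: ddiff_unique; rewrite sigmaPZ -scalerAr -ddiffP scalerBr. Qed.

Lemma ddiffXM i g :
  ddiff v ('X_i * g) = 'X_i * ddiff v g + (2 / dotv v v * v 0 i) *: s g.
Proof.
apply: ddiff_unique; rewrite sigmaPM sigmaPX -!mul_mpolyC mulrDr mulrCA -ddiffP.
ring.
Qed.

End Reflection.

Lemma pos_roots_anisotropic (R : realFieldType) N (Rs : seq 'rV[R]_N) u0 v :
  v \in pos_roots Rs u0 -> dotv v v != 0.
Proof.
rewrite mem_filter => /andP[u0v_gt0 _]; apply: contraTneq u0v_gt0 => vv0.
have v_eq0 k : v 0 k = 0.
  have /eqP : v 0 k * v 0 k = 0.
    by apply: (psumr_eq0P _ vv0) => // l _; rewrite -expr2 sqr_ge0.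
  by rewrite mulf_eq0 orbb => /eqP.
by rewrite /dotv big1 ?ltxx // => k _; rewrite v_eq0 mulr0.
Qed.

Section DunklOperators.
Variables (R : realFieldType) (N : nat) (Rs : seq 'rV[R]_N) (u0 : 'rV[R]_N)
  (kappa : 'rV[R]_N -> R).
Hypothesis anisotropic : forall v, v \in pos_roots Rs u0 -> dotv v v != 0.
Local Notation P := {mpoly R[N]}.
Local Notation PR := (pos_roots Rs u0).
Local Notation D := (Dunkl Rs u0 kappa).
Local Notation E := (xnabla Rs u0 kappa).

Lemma DunklD i f g : D i (f + g) = D i f + D i g.
Proof.
rewrite /Dunkl mderivD -addrACA -big_split /=; congr (_ + _).
by apply: eq_big_seq => v /anisotropic hv; rewrite ddiffD // scalerDr.
Qed.

Lemma DunklZ i a f : D i (a *: f) = a *: D i f.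
Proof.
rewrite /Dunkl mderivZ scalerDr; congr (_ + _); rewrite scaler_sumr.
by apply: eq_big_seq => v /anisotropic hv; rewrite ddiffZ // !scalerA mulrC.
Qed.

Lemma DunklB i f g : D i (f - g) = D i f - D i g.
Proof. by rewrite DunklD -scaleN1r DunklZ scaleN1r. Qed.

Lemma Dunkl_sum i I (r : seq I) (Pr : pred I) (F : I -> P) :
  D i (\sum_(k <- r | Pr k) F k) = \sum_(k <- r | Pr k) D i (F k).
Proof.
apply: (big_morph _ (DunklD i)).
by have := DunklZ i 0 0; rewrite !scale0r.
Qed.

Lemma DunklXM i j g :
  D j ('X_i * g) = 'X_i * D j g + (i == j)%:R *: g
    + \sum_(v <- PR) (kappa v * (2 / dotv v v) * (v 0 i * v 0 j)) *: sigmaP v g.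
Proof.
rewrite /Dunkl mderivM mderivXU mulr_natl -scaler_nat mulrDr.
under [X in _ + X = _]eq_big_seq => v /anisotropic hv do
  rewrite ddiffXM // scalerDr scalerAr scalerA.
rewrite [X in _ + X = _]big_split /= -[X in _ + (X + _) = _]mulr_sumr.
rewrite [_ *: g + _]addrC addrACA addrA.
by congr (_ + _); apply: eq_bigr => v _; congr (_ *: _); ring.
Qed.

Definition reflection_term f : P := \sum_(v <- PR)
  (kappa v * (2 / dotv v v)) *: (linP v * sigmaP v (dirD Rs u0 kappa v f)).

Lemma sum_X_reflection (g : 'I_N -> P) :
  \sum_(i < N) \sum_(j < N) 'X_i *
    \sum_(v <- PR)
      (kappa v * (2 / dotv v v) * (v 0 i * v 0 j)) *: sigmaP v (g j)
  = \sum_(v <- PR) (kappa v * (2 / dotv v v)) *: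
      (linP v * sigmaP v (\sum_(j < N) v 0 j *: g j)).
Proof.
under eq_bigr => i _ do under eq_bigr => j _ do rewrite mulr_sumr.
under eq_bigr => i _ do rewrite exchange_big.
rewrite exchange_big /=; apply: eq_bigr => v _.
rewrite /linP mulr_suml scaler_sumr; apply: eq_bigr => i _.
rewrite sigmaP_sum mulr_sumr scaler_sumr; apply: eq_bigr => j _.
by rewrite sigmaPZ -scalerAl -scalerAr -scalerAr !scalerA; congr (_ *: _); ring.
Qed.

Lemma xnabla_sigma v f :
  \sum_(i < N) 'X_i * sigmaP v (D i f)
  = sigmaP v (E f)
    + (2 / dotv v v) *: (linP v * sigmaP v (dirD Rs u0 kappa v f)).
Proof.
rewrite /xnabla sigmaP_sum.
under [in RHS]eq_bigr => i _ do rewrite sigmaPM sigmaPX mulrBl.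
rewrite sumrB.
have -> : \sum_(i < N) ((2 / dotv v v * v 0 i) *: linP v) * sigmaP v (D i f)
    = (2 / dotv v v) *: (linP v * sigmaP v (dirD Rs u0 kappa v f)).
  rewrite /dirD sigmaP_sum mulr_sumr scaler_sumr; apply: eq_bigr => i _.
  by rewrite sigmaPZ -scalerAl -scalerAr scalerA.
by rewrite subrK.
Qed.

Definition xxDD f : P := \sum_(i < N) \sum_(j < N) 'X_i * ('X_j * D j (D i f)).

Lemma sum_XDXD_diag f :
  \sum_(i < N) \sum_(j < N) 'X_i * D j ('X_i * D j f)
  = normsqP R N * DLap Rs u0 kappa f + E f + reflection_term f.
Proof.
under eq_bigr => i _ do under eq_bigr => j _ do rewrite DunklXM 2!mulrDr.
under eq_bigr => i _ do rewrite !big_split /=.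
rewrite [LHS]big_split [X in X + _ = _]big_split /=; congr (_ + _ + _).
- rewrite /normsqP /DLap mulr_suml; apply: eq_bigr => i _.
  by rewrite mulr_sumr; apply: eq_bigr => j _; rewrite mulrA expr2.
- by apply: eq_bigr => i _; rewrite -mulr_sumr sum_kronecker.
- by rewrite sum_X_reflection.
Qed.

Lemma xnabla_xnabla f : E (E f) = xxDD f + E f + reflection_term f.
Proof.
have -> : E (E f) = \sum_(j < N) \sum_(i < N) 'X_j * D j ('X_i * D i f).
  by apply: eq_bigr => j _; rewrite Dunkl_sum mulr_sumr.
under eq_bigr => j _ do under eq_bigr => i _ do rewrite DunklXM 2!mulrDr.
under eq_bigr => j _ do rewrite !big_split /=.
rewrite [LHS]big_split [X in X + _ = _]big_split.
rewrite [X in X + _ + _ = _]exchange_big /=.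
under [X in X + _ + _ = _]eq_bigr => i _ do
  under eq_bigr => j _ do rewrite mulrCA.
congr (_ + _ + _).
- apply: eq_bigr => j _; rewrite -mulr_sumr.
  by under eq_bigr => i _ do rewrite eq_sym; rewrite sum_kronecker.
- under eq_bigr => j _ do under eq_bigr => i _ do
    under eq_bigr => v _ do rewrite [v 0 i * _]mulrC.
  by rewrite sum_X_reflection.
Qed.

Lemma sum_XDXD_cross f :
  \sum_(i < N) \sum_(j < N) 'X_i * D j ('X_j * D i f)
  = xxDD f + N%:R *: E f
    + 2 *: (\sum_(v <- PR) kappa v *: sigmaP v (E f) + reflection_term f).
Proof.
have sum_coef v : v \in PR ->
    \sum_(j < N) kappa v * (2 / dotv v v) * (v 0 j * v 0 j) = kappa v * 2.
  by move=> /anisotropic hv; rewrite -mulr_sumr -mulrA divfK.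
under eq_bigr => i _ do
  under eq_bigr => j _ do rewrite DunklXM eqxx scale1r 2!mulrDr.
under eq_bigr => i _ do rewrite !big_split /=.
rewrite [LHS]big_split [X in X + _ = _]big_split /=; congr (_ + _ + _).
- rewrite /xnabla scaler_sumr; apply: eq_bigr => i _.
  by rewrite sumr_const card_ord scaler_nat.
- under eq_bigr => i _ do under eq_bigr => j _ do rewrite mulr_sumr.
  under eq_bigr => i _ do rewrite exchange_big.
  rewrite exchange_big /= /reflection_term -big_split scaler_sumr /=.
  apply: eq_big_seq => v hv.
  rewrite -scalerA -scalerDr -xnabla_sigma scalerA scaler_sumr.
  apply: eq_bigr => i _; under eq_bigr => j _ do rewrite -scalerAr.
  by rewrite -scaler_suml sum_coef // mulrC.
Qed.

Lemma Jop_eps i j g :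
  Jop Rs u0 kappa (epsv R i) (epsv R j) g = 'X_i * D j g - 'X_j * D i g.
Proof.
have dirD_eps k : dirD Rs u0 kappa (epsv R k) g = D k g.
  rewrite /dirD -[RHS](sum_kronecker (fun l => D l g)).
  by apply: eq_bigr => l _; rewrite /epsv mxE eqxx eq_sym.
by rewrite /Jop !linP_eps !dirD_eps.
Qed.

Lemma calJ_sum f : calJ Rs u0 kappa f
  = \sum_(i < N) \sum_(j < N) 'X_i * D j ('X_i * D j f)
    - \sum_(i < N) \sum_(j < N) 'X_i * D j ('X_j * D i f).
Proof.
rewrite /calJ -sumrB; under [RHS]eq_bigr => i _ do rewrite -sumrB.
rewrite -sum_ltn_symmetrize => [|i]; last exact: subrr.
apply: eq_bigr => i _; apply: eq_bigr => j _.
by rewrite !Jop_eps !DunklB !mulrBr opprB.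
Qed.

Lemma calJ_formula f : calJ Rs u0 kappa f =
  normsqP R N * DLap Rs u0 kappa f - E (E f) - (N%:R - 2) *: E f
    - 2 *: \sum_(v <- PR) kappa v *: sigmaP v (E f).
Proof.
rewrite calJ_sum [X in X - _ = _]sum_XDXD_diag [X in _ - X = _]sum_XDXD_cross.
rewrite xnabla_xnabla scalerBl scalerDr !scaler_nat.
set s := \sum_(v <- PR) _; set l := normsqP R N * _; clearbody s l.
by move: (xxDD f) (E f) (reflection_term f) => t e q; ring.
Qed.

End DunklOperators.

Theorem mainTheorem12 (R : realFieldType) (N : nat) (Rs : seq 'rV[R]_N)
  (u0 : 'rV[R]_N) (kappa : 'rV[R]_N -> R)
  (hR : root_system Rs) (hu0 : regular_vec Rs u0)
  (hk : multiplicity Rs kappa) (f : {mpoly R[N]}) :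
  calJ Rs u0 kappa f =
    normsqP R N * DLap Rs u0 kappa f
    - xnabla Rs u0 kappa (xnabla Rs u0 kappa f)
    - (N%:R - 2) *: xnabla Rs u0 kappa f
    - 2 *: \sum_(v <- pos_roots Rs u0)
             kappa v *: sigmaP v (xnabla Rs u0 kappa f).
Proof. exact: calJ_formula kappa (@pos_roots_anisotropic R N Rs u0) f. Qed.
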